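(* Let $G$ be a finite, simple, connected graph with $\dim_{wt}(G)=2$ and let $\{u,v\}$ be a weak total metric basis of $G$. Then $u$ and $v$ each have degree at most two.
   Context: $d(x,y)$ is the shortest-path distance. A set $W\subseteq V(G)$ is a resolving set if for every two distinct vertices $y,z$ there is $x\in W$ with $d(y,x)\ne d(z,x)$. A set $W$ is a weak total resolving set (WTR-set) if $W$ is resolving and, for every $w\in W$ and every $x\in V(G)\setminus W$, there is $w'\in W\setminus\{w\}$ with $d(x,w')\ne d(w,w')$. $\dim_{wt}(G)$ is the minimum cardinality of a WTR-set, and a weak total metric basis is a WTR-set of that cardinality. *)

From mathcomp Require Import all_boot.
Set Implicit Arguments. Unset Strict Implicit. Unset Printing Implicit Defensive.

Section Graph.
Variables (T : finType) (e : rel T).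

Definition simple_graph := symmetric e /\ irreflexive e.
Definition connected_graph := forall x y : T, connect e x y.

Definition walk_n (n : nat) (x y : T) : bool :=
  [exists p : n.-tuple T, path e x p && (last x p == y)].

(* shortest-path distance: least n with an n-edge walk from x to y.
   In a connected graph this n is < #|T|, so searching 0..#|T|-1 suffices. *)
Definition dist (x y : T) : nat := find (fun n => walk_n n x y) (iota 0 #|T|).

Definition deg (x : T) : nat := #|[set y | e x y]|.

Definition resolving (W : {set T}) : bool :=
  [forall y, forall z, (y != z) ==> [exists x in W, dist y x != dist z x]].

Definition wtr_set (W : {set T}) : bool :=
  resolving W &&
  [forall w in W, forall x in ~: W,
     [exists w' in W :\ w, dist x w' != dist w w']].

(* minimum cardinality of a WTR-set (V(G) itself is always one) *)
Definition dim_wt : nat := \big[minn/#|T|]_(W : {set T} | wtr_set W) #|W|.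

Definition wt_basis (W : {set T}) : bool := wtr_set W && (#|W| == dim_wt).
End Graph.

(* Let {u, v} be a weak total resolving set and d := dist u v.  Every
   neighbour y of u lies outside {u, v} or equals v, and in the first case the
   weak total condition for (u, y) forces dist y v <> d; since moving along an
   edge changes distances by at most one, dist y v is d - 1 or d + 1 (also
   when y = v, where d = 1).  All neighbours of u are at distance 1 from u, so
   resolvability makes y |-> dist y v injective on them, hence u has at most
   two neighbours. *)
From mathcomp Require Import all_boot.
From mathcomp Require Import zify.

Set Implicit Arguments.
Unset Strict Implicit.

Section Distance.
Variables (T : finType) (e : rel T).
Hypothesis conn : connected_graph e.

Lemma walk_n_short x y : exists2 k, k < #|T| & walk_n e k x y.
Proof.
have [p pth ->] := connectP (conn x y).
have [p' pth' uq _] := shortenP pth.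
exists (size p'); first by have := max_card (mem (x :: p')); rewrite (card_uniqP uq).
by apply/existsP; exists (in_tuple p'); rewrite /= pth' eqxx.
Qed.

Lemma dist_lt_card x y : dist e x y < #|T|.
Proof.
have [k lk wk] := walk_n_short x y.
rewrite /dist -[X in _ < X](size_iota 0 #|T|) -has_find.
by apply/hasP; exists k; rewrite ?mem_iota.
Qed.

Lemma dist_walk x y : walk_n e (dist e x y) x y.
Proof.
have has_walk : has (fun n => walk_n e n x y) (iota 0 #|T|).
  by rewrite has_find size_iota dist_lt_card.
by have := nth_find 0 has_walk; rewrite nth_iota ?add0n // dist_lt_card.
Qed.

Lemma dist_min k x y : walk_n e k x y -> dist e x y <= k.
Proof.
move=> wk; have [lk|] := ltnP k #|T|; last first.
  by move=> le_card_k; apply/ltnW/(leq_trans (dist_lt_card x y)).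
rewrite leqNgt; apply/negP => lt_k.
by have := before_find 0 lt_k; rewrite nth_iota // add0n wk.
Qed.

Lemma dist_eq0 x y : (dist e x y == 0) = (x == y).
Proof.
apply/eqP/eqP => [d0|<-].
  by have := dist_walk x y; rewrite d0 => /existsP[p]; rewrite (tuple0 p) => /eqP.
apply/eqP; rewrite -leqn0; apply: dist_min.
by apply/existsP; exists (in_tuple [::]); rewrite /= eqxx.
Qed.

Lemma dist_refl x : dist e x x = 0.
Proof. by apply/eqP; rewrite dist_eq0. Qed.

Lemma dist_edge z x y : e x y -> dist e x z <= (dist e y z).+1.
Proof.
move=> exy; apply: dist_min.
have /existsP[p /andP[pth lst]] := dist_walk y z.
by apply/existsP; exists [tuple of y :: p]; rewrite /= exy pth.
Qed.

Lemma dist_adj x y : e x y -> x != y -> dist e x y = 1.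
Proof.
move=> exy nxy; have := dist_edge y exy; rewrite dist_refl -(dist_eq0 x y) in nxy *.
by case: (dist e x y) nxy => [|[]].
Qed.

End Distance.

Section WeakTotalPair.
Variables (T : finType) (e : rel T) (u v : T).
Hypotheses (conn : connected_graph e) (sg : simple_graph e) (nuv : u != v).
Hypothesis wtr : wtr_set e [set u; v].

Let sym : symmetric e := sg.1.
Let irr : irreflexive e := sg.2.

Lemma dist_pair_gt0 : 0 < dist e u v.
Proof. by rewrite lt0n (dist_eq0 conn). Qed.

Lemma neighbor_dist_pair_neq y : e u y -> dist e y v != dist e u v.
Proof.
move=> euy; have [->|nyv] := eqVneq y v.
  by rewrite dist_refl // eq_sym -lt0n dist_pair_gt0.
have nyu : y != u by apply: contraTneq euy => ->; rewrite irr.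
have yW : y \in ~: [set u; v] by rewrite !inE negb_or nyu nyv.
have uW : u \in [set u; v] by rewrite !inE eqxx.
have /forall_inP/(_ u uW)/forall_inP/(_ y yW) := (andP wtr).2.
by case/exists_inP => w; rewrite !inE => /andP[/negbTE-> /eqP->].
Qed.

Lemma neighbor_dist_pair y : e u y ->
  (dist e y v == (dist e u v).-1) || (dist e y v == (dist e u v).+1).
Proof.
move=> euy; have := neighbor_dist_pair_neq euy.
have := dist_edge conn v euy; rewrite sym in euy; have := dist_edge conn v euy.
lia.
Qed.

Lemma neighbor_dist_pair_inj : {in [set y | e u y] &, injective (dist e ^~ v)}.
Proof.
move=> y z; rewrite !inE => euy euz d_yz_v; apply/eqP/negP => /negP nyz.
have /forallP/(_ y)/forallP/(_ z) := (andP wtr).1.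
rewrite nyz => /exists_inP[w]; rewrite !inE => /orP[]/eqP->; last by rewrite d_yz_v eqxx.
have adj_u x : e u x -> dist e x u = 1.
  move=> eux; apply: (dist_adj conn); first by rewrite sym.
  by apply: contraTneq eux => ->; rewrite irr.
by rewrite !adj_u.
Qed.

Lemma deg_wtr_pair : deg e u <= 2.
Proof.
pose below y := dist e y v < dist e u v.
have below_inj : {in [set y | e u y] &, injective below}.
  move=> y z Ny Nz /= eq_below; apply: neighbor_dist_pair_inj => //.
  move: eq_below Ny Nz; rewrite /below !inE => + /neighbor_dist_pair + /neighbor_dist_pair.
  by have := dist_pair_gt0; lia.
rewrite /deg -(card_in_imset below_inj).
by apply: leq_trans (max_card _) _; rewrite card_bool.
Qed.

End WeakTotalPair.

Theorem theorem1 (T : finType) (e : rel T) (u v : T) :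
  simple_graph e -> connected_graph e ->
  dim_wt e = 2 -> u != v -> wt_basis e [set u; v] ->
  deg e u <= 2 /\ deg e v <= 2.
Proof.
move=> sg conn _ nuv /andP[wtr _]; split; first exact: deg_wtr_pair wtr.
have swap : [set v; u] = [set u; v] by apply/setP => x; rewrite !inE orbC.
by apply: (deg_wtr_pair conn sg (v := u)); rewrite 1?eq_sym // swap.
Qed.
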